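(* Let $K$ be a field, $n\ge 1$, and $A,B\in M_n(K)$. Consider the properties: $(\bot)$: $A$ has an eigen-covector $u$ and $B$ has an eigenvector $v$ with $uv=0$. $(\subset)$: $B$ has an eigenvector contained in an $(n-1)$-dimensional $A$-invariant subspace of $K^n$. $(\triangle)$: $n\ge 2$ and there is $P\in GL_n(K)$ with $P^{-1}AP=\begin{pmatrix}A'&*\\0&a\end{pmatrix}$ and $P^{-1}BP=\begin{pmatrix}b&*\\0&B'\end{pmatrix}$, where $a,b\in K$ and $A',B'\in M_{n-1}(K)$. $(<)$: $B$ has an eigenvector $v$ with $\dim K[A]v<n$. $(\top)$: $T(A,B)=0$. Then: (a) $(\bot)\Leftrightarrow(\subset)\Leftrightarrow(\triangle)\Rightarrow(<)\Rightarrow(\top)$. (b) If $K$ contains all eigenvalues of $A$, then $(\bot),(\subset),(\triangle),(<)$ are equivalent. (c) If $K$ contains all eigenvalues of $A$ and of $B$, then all five properties are equivalent.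
   Context: For a commutative ring $R$ with $1$ and $A,B\in M_n(R)$, $M(A,B)\in M_{n^2}(R)$ is the block matrix consisting of $n\times n$ blocks whose $(i,j)$-th block is $A^{j-1}B^{i-1}$ ($i,j=1,\dots,n$), and the (first) triangulant is $T(A,B)=\det M(A,B)$. Vectors are column vectors in $K^n$, covectors are row vectors. An eigenvector of $A$ is a nonzero column vector $v$ with $Av=\lambda v$ for some $\lambda\in K$; an eigen-covector of $A$ is a nonzero row vector $u$ with $uA=\lambda u$ for some $\lambda\in K$. A subspace $V\le K^n$ is $A$-invariant if $AV\subseteq V$. $K[A]$ denotes the unital subalgebra of $M_n(K)$ generated by $A$, so $K[A]v$ is the $A$-invariant subspace generated by $v$. *)

From HB Require Import structures.
From mathcomp Require Import all_boot all_order all_algebra.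
Set Implicit Arguments. Unset Strict Implicit. Unset Printing Implicit Defensive.
Import GRing.Theory.
Local Open Scope ring_scope.

Definition triangulant_mx (R : comPzRingType) (n : nat) (A B : 'M[R]_n)
  : 'M[R]_(\sum_(i < n) n) :=
  \mxblock_(i < n, j < n) (A ^+ j *m B ^+ i).
Definition triangulant (R : comPzRingType) (n : nat) (A B : 'M[R]_n) : R :=
  \det (triangulant_mx A B).

Section Props.
Variables (K : fieldType) (n : nat).

Definition eigenvec (A : 'M[K]_n) (v : 'cV[K]_n) : Prop :=
  v != 0 /\ exists lam : K, A *m v = lam *: v.
Definition eigencovec (A : 'M[K]_n) (u : 'rV[K]_n) : Prop :=
  u != 0 /\ exists lam : K, u *m A = lam *: u.

Definition invariant_sub (A : 'M[K]_n) (V : {vspace 'cV[K]_n}) : Prop :=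
  forall x, x \in V -> A *m x \in V.

(* K[A]v : the A-invariant subspace generated by v, i.e. span of A^i v.
   The powers A^i with i < n span K[A] (Cayley-Hamilton). *)
Definition KAv (A : 'M[K]_n) (v : 'cV[K]_n) : {vspace 'cV[K]_n} :=
  <<[seq A ^+ i *m v | i <- iota 0 n]>>%VS.

Definition prop_perp (A B : 'M[K]_n) : Prop :=
  exists (u : 'rV[K]_n) (v : 'cV[K]_n),
    eigencovec A u /\ eigenvec B v /\ u *m v = 0.

Definition prop_subset (A B : 'M[K]_n) : Prop :=
  exists (v : 'cV[K]_n) (V : {vspace 'cV[K]_n}),
    eigenvec B v /\ \dim V = n.-1 /\ invariant_sub A V /\ v \in V.

(* P^-1 A P = [A' * ; 0 a]  : last row of P^-1 A P vanishes off the diagonal;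
   P^-1 B P = [b * ; 0 B'] : first column of P^-1 B P vanishes below the
   diagonal. *)
Definition prop_triangle (A B : 'M[K]_n) : Prop :=
  (2 <= n)%N /\ exists P : 'M[K]_n, P \in unitmx /\
    (forall i j : 'I_n, nat_of_ord i = n.-1 -> (nat_of_ord j < n.-1)%N ->
        (invmx P *m A *m P) i j = 0) /\
    (forall i j : 'I_n, nat_of_ord j = 0%N -> (0 < nat_of_ord i)%N ->
        (invmx P *m B *m P) i j = 0).

Definition prop_lt (A B : 'M[K]_n) : Prop :=
  exists v : 'cV[K]_n, eigenvec B v /\ (\dim (KAv A v) < n)%N.

Definition prop_top (A B : 'M[K]_n) : Prop := triangulant A B = 0.

(* K contains all eigenvalues of A: the characteristic polynomial splits *)
Definition splits_in (A : 'M[K]_n) : Prop :=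
  exists s : seq K, char_poly A = \prod_(x <- s) ('X - x%:P).

End Props.

From mathcomp Require Import all_boot all_order all_algebra.
From Stdlib Require Import Classical.
Set Implicit Arguments. Unset Strict Implicit. Unset Printing Implicit Defensive.
Import GRing.Theory.
Local Open Scope ring_scope.

(* If [u] is an eigen-covector of [A], its kernel hyperplane is [A]-invariant,
   every [A]-invariant hyperplane is of this form, and it contains [K[A]v]
   whenever [uv = 0]; a basis of [ker u] starting with [v], completed by one
   vector outside, conjugates [A] and [B] to the two block triangular forms.
   A relation [\sum_j k_j A^j v = 0] with [Bv = mu v] makes the column
   [(k_j v)_j] a kernel vector of [M(A,B)], whence (<) => (T).
   The converses use split characteristic polynomials through Cayley-Hamilton:
   multiplying a nonzero row block on the right by the factors [C - l] one at
   a time, the last nonzero product is a left eigenvector of [C], and it stays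
   in any family stable under these multiplications.  Applied to a covector
   annihilating [K[A]v] this gives (<) => (perp).  Applied to a left kernel
   vector of [M(A,B)], cut into rows [y_i] with [\sum_i y_i A^k B^i = 0] for
   all [k], it yields rows that are eigen-covectors of [A] for one eigenvalue:
   either two of them are independent, and a combination is orthogonal to an
   eigenvector of [B], or all are multiples [c_i z], and [\sum_i c_i z B^i = 0]
   is a Krylov relation for [B^T], reducing to the previous case. *)

Section Triangulant.
Variable K : fieldType.

Lemma eigencovec_expr n (A : 'M[K]_n) (u : 'rV[K]_n) l k :
  u *m A = l *: u -> u *m A ^+ k = l ^+ k *: u.
Proof.
move=> uA; elim: k => [|k IHk]; first by rewrite expr0 mulmx1 scale1r.
by rewrite exprSr mulmxA IHk -scalemxAl uA scalerA -exprSr.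
Qed.

Lemma eigenvec_expr n (B : 'M[K]_n) (v : 'cV[K]_n) l k :
  B *m v = l *: v -> B ^+ k *m v = l ^+ k *: v.
Proof.
move=> Bv; elim: k => [|k IHk]; first by rewrite expr0 mul1mx scale1r.
by rewrite exprS -mulmxA IHk -scalemxAr Bv scalerA -exprSr.
Qed.

Lemma trmx_expr n (A : 'M[K]_n) k : (A ^+ k)^T = A^T ^+ k.
Proof.
elim: k => [|k IHk]; first by rewrite !expr0 trmx1.
by rewrite exprS trmx_mul IHk exprSr.
Qed.

Lemma char_poly_trmx n (A : 'M[K]_n) : char_poly A^T = char_poly A.
Proof.
rewrite /char_poly -det_tr; congr (\det _).
by apply/matrixP => i j; rewrite !mxE eq_sym.
Qed.

Lemma splits_in_trmx n (A : 'M[K]_n) : splits_in A^T <-> splits_in A.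
Proof. by rewrite /splits_in char_poly_trmx. Qed.

Lemma eigencovec_trmx n (A : 'M[K]_n) (u : 'rV[K]_n) :
  eigencovec A^T u -> eigenvec A u^T.
Proof.
move=> [u0 [l uA]]; split; first by rewrite trmx_eq0.
by exists l; rewrite -[A]trmxK -trmx_mul uA linearZ.
Qed.

Lemma expr_low_combination n (A : 'M[K]_n.+1) k :
  exists c : 'I_n.+1 -> K, A ^+ k = \sum_(i < n.+1) c i *: A ^+ i.
Proof.
have deg_le : (degree_mxminpoly A <= n.+1)%N.
  have := dvdp_leq (monic_neq0 (char_poly_monic A)) (mxminpoly_dvd_char A).
  by rewrite size_mxminpoly size_char_poly.
have sub_pow : (powers_mx A (degree_mxminpoly A) <= powers_mx A n.+1)%MS.
  apply/row_subP => i; rewrite rowK.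
  by apply: (eq_row_sub (widen_ord deg_le i)); rewrite rowK.
have /submxP [D AkD] := submx_trans (horner_mx_mem A ('X ^+ k)) sub_pow.
exists (fun i => D 0 i); rewrite rmorphXn /= horner_mx_X in AkD.
apply: (can_inj (@mxvecK _ n.+1 n.+1)).
rewrite AkD mulmx_sum_row linear_sum; apply: eq_bigr => i _.
by rewrite linearZ rowK.
Qed.

Lemma scalar_mx11_eq0 (a : K) : ((a%:M : 'M[K]_1) == 0) = (a == 0).
Proof.
apply/eqP/eqP => [/matrixP/(_ 0 0)|->]; last exact: raddf0.
by rewrite !mxE mulr1n.
Qed.

Lemma mul_delta_covec n (u : 'rV[K]_n) j : u *m delta_mx j 0 = (u 0 j)%:M.
Proof.
apply/matrixP => a b; rewrite !ord1 !mxE (bigD1 j) //= big1 ?addr0.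
  by rewrite !mxE !eqxx mulr1 mulr1n.
by move=> k kj; rewrite !mxE (negbTE kj) mulr0.
Qed.

Lemma delta_mx_neq0 m n (i : 'I_m) (j : 'I_n) : delta_mx i j != 0 :> 'M[K]_(m, n).
Proof. by apply/eqP => /matrixP/(_ i j)/eqP; rewrite !mxE !eqxx oner_eq0. Qed.

Definition covec_ker n (u : 'rV[K]_n) : {vspace 'cV[K]_n} :=
  lker (linfun (mulmx u : 'cV[K]_n -> 'M[K]_1)).

Lemma mem_covec_ker n (u : 'rV[K]_n) x : (x \in covec_ker u) = (u *m x == 0).
Proof. by rewrite memv_ker lfunE. Qed.

Lemma dim_covec_ker n (u : 'rV[K]_n) : u != 0 -> \dim (covec_ker u) = n.-1.
Proof.
case/rV0Pn=> j uj; pose f := linfun (mulmx u : 'cV[K]_n -> 'M[K]_1).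
have := limg_ker_dim f fullv; rewrite capfv dimvf dim_matrix mulr1.
suff -> : \dim (limg f) = 1%N by rewrite addn1 => /(congr1 predn) <-.
apply/eqP; rewrite eqn_leq (leq_trans (dimvS (subvf _))) ?dimvf ?dim_matrix //=.
rewrite lt0n dimv_eq0.
apply: contraNneq uj => f0; have := memv_img f (memvf (delta_mx j 0 : 'cV[K]_n)).
by rewrite f0 memv0 lfunE /= mul_delta_covec scalar_mx11_eq0.
Qed.

Lemma subv_covec_ker n (V : {vspace 'cV[K]_n}) : (\dim V < n)%N ->
  exists2 u : 'rV[K]_n, u != 0 & (V <= covec_ker u)%VS.
Proof.
move=> dimV; pose S : 'M[K]_(n, \dim V) := \matrix_(i, j) ((vbasis V)`_j) i 0.
have colS j : col j S = (vbasis V)`_j by apply/matrixP => i k; rewrite !mxE ord1.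
have : kermx S != 0.
  by rewrite -mxrank_eq0 mxrank_ker -lt0n subn_gt0 (leq_ltn_trans (rank_leq_col S)).
case/rowV0Pn=> u /sub_kermxP uS u0; exists u => //.
apply/subvP => x Vx; rewrite mem_covec_ker (coord_vbasis Vx) mulmx_sumr.
rewrite big1 // => j _.
by rewrite -scalemxAr -colS !colE mulmxA uS mul0mx scaler0.
Qed.

Lemma covec_ker_proportional n (u w : 'rV[K]_n) : u != 0 ->
  (covec_ker u <= covec_ker w)%VS -> exists l : K, w = l *: u.
Proof.
case/rV0Pn=> j uj /subvP ker_uw; exists (w 0 j / u 0 j); apply/rowP => k.
pose x : 'cV[K]_n := delta_mx k 0 - (u 0 k / u 0 j) *: delta_mx j 0.
have entry (y : 'rV[K]_n) : y *m x = (y 0 k - u 0 k / u 0 j * y 0 j)%:M.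
  by rewrite mulmxBr -scalemxAr !mul_delta_covec scale_scalar_mx raddfB.
have /ker_uw : x \in covec_ker u.
  by rewrite mem_covec_ker entry scalar_mx11_eq0 divfK // subrr.
rewrite mem_covec_ker entry scalar_mx11_eq0 subr_eq0 mxE => /eqP ->.
by rewrite mulrAC [RHS]mulrC mulrA.
Qed.

Lemma unitmx_of_free_cols n (s : seq 'cV[K]_n) : size s = n -> free s ->
  (\matrix_(i, j) (s`_j) i 0 : 'M[K]_n) \in unitmx.
Proof.
move=> size_s free_s; pose t := @Tuple n _ s (introT eqP size_s).
rewrite unitmxE unitfE -det_tr; apply: contraTneq isT => /eqP/det0P [y y0 yP].
have: \sum_(j < n) y 0 j *: t`_j = 0.
  apply/matrixP => i k; move/matrixP: yP => /(_ 0 i); rewrite !mxE => yPi.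
  rewrite ord1 summxE -[RHS]yPi; apply: eq_bigr => j _.
  by rewrite !mxE.
have free_t : free t by [].
move/(freeP free_t) => y_eq0; case/eqP: y0; apply/rowP => j.
by rewrite y_eq0 mxE.
Qed.

Section LeftEigenvectors.
Variables (m n : nat) (C : 'M[K]_n.+1).

Lemma prod_linear_factors_eq0 (s : seq K) :
  char_poly C = \prod_(x <- s) ('X - x%:P) -> \prod_(l <- s) (C - l%:M) = 0.
Proof.
move=> charC; have := Cayley_Hamilton C; rewrite charC rmorph_prod => <-.
by apply: eq_bigr => x _; rewrite rmorphB /= horner_mx_X horner_mx_C.
Qed.

Lemma closed_left_eigen (P : 'M[K]_(m, n.+1) -> Prop) :
  (forall Y l, P Y -> P (Y *m (C - l%:M))) ->
  forall (s : seq K) Y, P Y -> Y != 0 -> Y *m \prod_(l <- s) (C - l%:M) = 0 ->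
  exists Z l, [/\ P Z, Z != 0 & Z *m C = l *: Z].
Proof.
move=> closedP; elim=> [|l s IHs] Y PY Y0.
  by rewrite big_nil mulmx1 => /eqP; rewrite (negbTE Y0).
rewrite big_cons -mulmxE mulmxA.
have [YCl0|YCl_neq0] := eqVneq (Y *m (C - l%:M)) 0.
  exists Y, l; split=> //; apply/eqP; rewrite -subr_eq0.
  by rewrite -mul_mx_scalar -mulmxBr YCl0.
by apply: IHs => //; apply: closedP.
Qed.

Lemma splits_closed_left_eigen (P : 'M[K]_(m, n.+1) -> Prop) Y :
  splits_in C -> (forall Y l, P Y -> P (Y *m (C - l%:M))) -> P Y -> Y != 0 ->
  exists Z l, [/\ P Z, Z != 0 & Z *m C = l *: Z].
Proof.
move=> [s /prod_linear_factors_eq0 prod0] closedP PY Y0.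
by apply: (closed_left_eigen (s := s) closedP PY Y0); rewrite prod0 mulmx0.
Qed.

End LeftEigenvectors.

Lemma splits_eigencovec n (C : 'M[K]_n.+1) :
  splits_in C -> exists u, eigencovec C u.
Proof.
move=> splitC.
have [Z [l [_ /rowV0Pn [u /submxP [D ->] u0] ZC]]] :=
  @splits_closed_left_eigen n.+1 n C (fun=> True) 1%:M splitC
    (fun _ _ _ => I) I (oner_neq0 _).
by exists (D *m Z); split=> //; exists l; rewrite -mulmxA ZC scalemxAr.
Qed.

Lemma splits_eigenvec n (C : 'M[K]_n.+1) :
  splits_in C -> exists v, eigenvec C v.
Proof.
by rewrite -splits_in_trmx => /splits_eigencovec [u /eigencovec_trmx]; exists u^T.
Qed.

Section Krylov.
Variables (n : nat) (C : 'M[K]_n) (x : 'cV[K]_n).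

Definition krylov_seq := [seq C ^+ i *m x | i <- iota 0 n].

Lemma size_krylov_seq : size krylov_seq = n.
Proof. by rewrite size_map size_iota. Qed.

Let krylov_tuple := Tuple (introT eqP size_krylov_seq).

Lemma nth_krylov_tuple (i : 'I_n) : krylov_tuple`_i = C ^+ i *m x.
Proof. by rewrite /= (nth_map 0%N) ?size_iota // nth_iota. Qed.

Lemma KAv_dim_ltP : (\dim (KAv C x) < n)%N <->
  exists2 k : 'I_n -> K, (exists i, k i != 0) &
    \sum_(i < n) k i *: (C ^+ i *m x) = 0.
Proof.
have -> : (\dim (KAv C x) < n)%N = ~~ free krylov_tuple.
  rewrite /free /= size_krylov_seq ltn_neqAle.
  by have := dim_span krylov_seq; rewrite size_krylov_seq => ->; rewrite andbT.
split=> [/freeP not_free | [k [i ki] rel_k]]; last first.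
  apply/negP => /freeP /(_ k) free_k; case/eqP: ki; apply: free_k.
  by rewrite -[RHS]rel_k; apply: eq_bigr => j _; rewrite nth_krylov_tuple.
apply: NNPP => no_rel; apply: not_free => k rel_k i.
apply: NNPP => ki; apply: no_rel; exists k; first by exists i; apply/eqP.
by rewrite -[RHS]rel_k; apply: eq_bigr => j _; rewrite nth_krylov_tuple.
Qed.

End Krylov.

Lemma expr_mem_KAv n (C : 'M[K]_n.+1) x k : C ^+ k *m x \in KAv C x.
Proof.
have [c ->] := expr_low_combination C k.
rewrite mulmx_suml; apply: memv_suml => i _; rewrite -scalemxAl.
apply/memvZ/memv_span/mapP; exists (val i) => //.
by rewrite mem_iota ltn_ord.
Qed.

Lemma KAv_dim_lt_eigencovec n (C : 'M[K]_n.+1) x :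
  splits_in C -> (\dim (KAv C x) < n.+1)%N ->
  exists2 u, eigencovec C u & u *m x = 0.
Proof.
move=> splitC /subv_covec_ker [u u0 /subvP annKAv].
pose P (Y : 'rV[K]_n.+1) := forall k, Y *m (C ^+ k *m x) = 0.
have closedP Y l : P Y -> P (Y *m (C - l%:M)).
  move=> PY k; rewrite -mulmxA mulmxBl mul_scalar_mx mulmxA -[C *m _]/(C * C ^+ k).
  by rewrite -exprS mulmxBr -scalemxAr !PY scaler0 subr0.
have Pu : P u by move=> k; apply/eqP; rewrite -mem_covec_ker annKAv ?expr_mem_KAv.
have [w [l [Pw w0 wC]]] := splits_closed_left_eigen splitC closedP Pu u0.
by exists w; [split=> //; exists l | have := Pw 0%N; rewrite expr0 mul1mx].
Qed.

Section Conjugation.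
Variables (n : nat) (P M : 'M[K]_n).
Hypothesis P_unit : P \in unitmx.

Lemma conj_eigencovec (r : 'rV[K]_n) l :
  r *m (invmx P *m M *m P) = l *: r -> (r *m invmx P) *m M = l *: (r *m invmx P).
Proof.
move=> rQ; have rMP : r *m invmx P *m M *m P = l *: r by rewrite -rQ !mulmxA.
by rewrite -(mulmxK P_unit (_ *m M)) rMP scalemxAl.
Qed.

Lemma conj_eigenvec (c : 'cV[K]_n) l :
  (invmx P *m M *m P) *m c = l *: c -> M *m (P *m c) = l *: (P *m c).
Proof.
move=> Qc; have PMPc : invmx P *m (M *m (P *m c)) = l *: c by rewrite -Qc !mulmxA.
by rewrite -(mulKVmx P_unit (M *m _)) PMPc scalemxAr.
Qed.

Lemma conj_col_offdiag_eq0 j mu :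
  M *m col j P = mu *: col j P -> forall i, i != j -> (invmx P *m M *m P) i j = 0.
Proof.
move=> MPj i ij.
have colQ : col j (invmx P *m M *m P) = mu *: delta_mx j 0.
  by rewrite colE -!mulmxA -colE MPj -scalemxAr colE mulmxA mulVmx ?mul1mx.
by move/colP/(_ i): colQ; rewrite !mxE (negbTE ij) mulr0.
Qed.

End Conjugation.

Lemma delta_mx_eigencovec n (Q : 'M[K]_n) i :
  (forall j, j != i -> Q i j = 0) ->
  (delta_mx 0 i : 'rV[K]_n) *m Q = Q i i *: delta_mx 0 i.
Proof.
move=> Qi; apply/rowP => j; rewrite -rowE !mxE.
by have [->|ji] := eqVneq j i; rewrite ?andbT ?andbF ?mulr1 ?mulr0 // Qi.
Qed.

Lemma delta_mx_eigenvec n (Q : 'M[K]_n) j :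
  (forall i, i != j -> Q i j = 0) ->
  Q *m (delta_mx j 0 : 'cV[K]_n) = Q j j *: delta_mx j 0.
Proof.
move=> Qj; apply/colP => i; rewrite -colE !mxE.
by have [->|ij] := eqVneq i j; rewrite ?andbT ?andbF ?mulr1 ?mulr0 // Qj.
Qed.

Lemma offdiag_eq0_of_eigencovec n (Q : 'M[K]_n) (r : 'rV[K]_n) i l :
  (forall j, j != i -> r 0 j = 0) -> r 0 i != 0 -> r *m Q = l *: r ->
  forall j, j != i -> Q i j = 0.
Proof.
move=> r_supp ri rQ j ji; move/rowP/(_ j): rQ; rewrite !mxE r_supp // mulr0.
rewrite (bigD1 i) //= big1 ?addr0 => [/eqP|k ki]; last by rewrite r_supp ?mul0r.
by rewrite mulf_eq0 (negbTE ri) => /eqP.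
Qed.

Lemma hyperplane_adapted_basis n (u : 'rV[K]_n) (v : 'cV[K]_n) :
  u != 0 -> v != 0 -> u *m v = 0 ->
  exists2 P : 'M[K]_n, P \in unitmx &
    (forall j : 'I_n, val j = 0%N -> col j P = v) /\
    (forall j : 'I_n, (j < n.-1)%N -> u *m col j P = 0).
Proof.
move=> u0 v0 uv; pose W := covec_ker u.
have vW : v \in W by rewrite mem_covec_ker uv.
have [jz ujz] := rV0Pn _ u0; pose z : 'cV[K]_n := delta_mx jz 0.
have zW : z \notin W by rewrite mem_covec_ker mul_delta_covec scalar_mx11_eq0.
pose D := (W :\: <[v]>)%VS.
have WD : (D + <[v]> = W)%VS by rewrite addv_diff; apply/addv_idPl; rewrite -memvE.
have dimD1 : (\dim D).+1 = n.-1.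
  move/(congr1 (@dimv _ _)): WD.
  by rewrite dimv_disjoint_sum ?capv_diff // dim_vline v0 dim_covec_ker // addn1.
have n_gt0 : (0 < n)%N by rewrite (leq_trans _ (leq_pred n)) // -dimD1.
pose s := v :: vbasis D ++ [:: z].
have size_s : size s = n by rewrite /= size_cat size_tuple addn1 dimD1 prednK.
have W_s : (W <= <<s>>)%VS.
  rewrite span_cons span_cat (span_basis (vbasisP D)) -WD subv_add addvSl andbT.
  exact: subv_trans (addvSl D _) (addvSr _ _).
have free_s : free s.
  rewrite /free size_s eqn_leq (leq_trans (dim_span s)) ?size_s //=.
  have Wz_s : (W + <[z]> <= <<s>>)%VS.
    by rewrite subv_add W_s -memvE memv_span // !inE mem_cat inE eqxx !orbT.
  have W_lt : (\dim W < \dim (W + <[z]>))%N.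
    rewrite (ltn_leqif (dimv_leqif_eq (addvSl _ _))).
    by apply: contra zW => /eqP ->; rewrite memvE addvSr.
  by apply: leq_trans (dimvS Wz_s); move: W_lt; rewrite /W dim_covec_ker // prednK.
exists (\matrix_(i, j) (s`_j) i 0); first exact: unitmx_of_free_cols.
have col_s j : col j (\matrix_(i, j) (s`_j) i 0) = s`_j.
  by apply/colP => i; rewrite !mxE.
split=> [j j0|[[|k] ?] /= k_le]; rewrite col_s ?j0 //.
apply/eqP; rewrite -mem_covec_ker -/W /s /= nth_cat size_tuple.
have k_D : (k < \dim D)%N by rewrite -ltnS dimD1.
rewrite k_D; apply: (subvP (diffvSl W <[v]>)); apply: vbasis_mem.
by rewrite mem_nth ?size_tuple.
Qed.

Lemma perp_subset n (A B : 'M[K]_n) : prop_perp A B -> prop_subset A B.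
Proof.
move=> [u [v [[u0 [l uA]] [Bv uv]]]].
exists v, (covec_ker u); split=> //; split; first exact: dim_covec_ker.
split; last by rewrite mem_covec_ker uv.
by move=> x; rewrite !mem_covec_ker mulmxA uA -scalemxAl => /eqP ->; rewrite scaler0.
Qed.

Lemma subset_perp n (A B : 'M[K]_n) : (0 < n)%N -> prop_subset A B -> prop_perp A B.
Proof.
move=> n_gt0 [v [V [Bv [dimV [AV Vv]]]]].
have [u u0 subVu] : exists2 u : 'rV[K]_n, u != 0 & (V <= covec_ker u)%VS.
  by apply: subv_covec_ker; rewrite dimV ltn_predL.
have /eqP Vu : V == covec_ker u by rewrite eqEdim subVu (dim_covec_ker u0) dimV leqnn.
have [l uA] : exists l : K, u *m A = l *: u.
  apply: covec_ker_proportional => //; apply/subvP => x.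
  by rewrite -Vu => /AV; rewrite Vu !mem_covec_ker mulmxA.
exists u, v; split; first by split=> //; exists l.
by split=> //; apply/eqP; rewrite -mem_covec_ker -Vu.
Qed.

Lemma triangle_perp n (A B : 'M[K]_n) : prop_triangle A B -> prop_perp A B.
Proof.
move=> [n_ge2 [P [P_unit [A_last B_first]]]].
have n_gt0 : (0 < n)%N by apply: leq_trans n_ge2.
have last_lt : (n.-1 < n)%N by rewrite prednK.
pose l := Ordinal last_lt; pose o := Ordinal n_gt0.
exists ((delta_mx 0 l : 'rV[K]_n) *m invmx P), (P *m (delta_mx o 0 : 'cV[K]_n)).
have l_neq_o : l != o by rewrite -val_eqE /= -(subnK n_ge2) addn2.
split; [split|split; [split|]].
- by rewrite mulmx_free_eq0 ?row_free_unit ?unitmx_inv ?delta_mx_neq0.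
- exists ((invmx P *m A *m P) l l); apply: conj_eigencovec => //.
  apply: delta_mx_eigencovec => j jl; apply: A_last => //.
  by rewrite ltn_neqAle -ltnS prednK // ltn_ord andbT -val_eqE in jl *.
- apply: contraNneq (delta_mx_neq0 o (0 : 'I_1)) => Pe0.
  by rewrite -(mulKmx P_unit (delta_mx _ _)) Pe0 mulmx0.
- exists ((invmx P *m B *m P) o o); apply: conj_eigenvec => //.
  apply: delta_mx_eigenvec => i io; apply: B_first => //.
  by rewrite lt0n -val_eqE in io *.
- by rewrite mulmxA -(mulmxA _ (invmx P)) mulVmx // mulmx1 mul_delta_mx_0.
Qed.

Lemma perp_triangle n (A B : 'M[K]_n) : prop_perp A B -> prop_triangle A B.
Proof.
move=> [u [v [[u0 [l uA]] [[v0 [mu Bv]] uv]]]].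
have n_ge2 : (1 < n)%N.
  have : (\dim <[v]> <= \dim (covec_ker u))%N.
    by apply: dimvS; rewrite -memvE mem_covec_ker uv.
  by rewrite dim_vline v0 dim_covec_ker // -subn1 subn_gt0.
have [P P_unit [P_first P_hyp]] := hyperplane_adapted_basis u0 v0 uv.
split=> //; exists P; split=> //; split=> [i j i_last j_lt | i j j0 i_gt0].
  have last_ne j' : (j' != i) = (j' < n.-1)%N.
    by rewrite -val_eqE /= i_last ltn_neqAle -ltnS prednK ?ltn_ord ?andbT // ltnW.
  have uP k : k != i -> (u *m P) 0 k = 0.
    rewrite last_ne => /P_hyp/eqP.
    by rewrite colE mulmxA mul_delta_covec scalar_mx11_eq0 => /eqP.
  apply: (@offdiag_eq0_of_eigencovec _ _ (u *m P) _ l); rewrite ?last_ne //.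
  - apply: contra u0 => /eqP ui; have : u *m P = 0.
      by apply/rowP => k; rewrite [RHS]mxE; have [-> //|/uP] := eqVneq k i.
    by move/(congr1 (mulmx^~ (invmx P))); rewrite mulmxK // mul0mx => ->.
  - by rewrite !mulmxA mulmxK // uA scalemxAl.
apply: (conj_col_offdiag_eq0 P_unit (mu := mu)); first by rewrite (P_first j j0) Bv.
by rewrite -val_eqE /= j0 -lt0n.
Qed.

Lemma perp_lt n (A B : 'M[K]_n) : (0 < n)%N -> prop_perp A B -> prop_lt A B.
Proof.
move=> n_gt0 [u [v [[u0 [l uA]] [Bv uv]]]]; exists v; split=> //.
suff /dimvS : (KAv A v <= covec_ker u)%VS.
  by rewrite dim_covec_ker // => /leq_ltn_trans; apply; rewrite ltn_predL.
apply/span_subvP => y /mapP [i _ ->]; rewrite mem_covec_ker mulmxA.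
by rewrite (eigencovec_expr _ uA) -scalemxAl uv scaler0.
Qed.

Lemma lt_perp n (A B : 'M[K]_n.+1) :
  splits_in A -> prop_lt A B -> prop_perp A B.
Proof.
move=> splitA [v [Bv /(KAv_dim_lt_eigencovec splitA) [u Au uv]]].
by exists u, v.
Qed.

Lemma lt_top n (A B : 'M[K]_n) : prop_lt A B -> prop_top A B.
Proof.
move=> [v [[v0 [mu Bv]] /KAv_dim_ltP [k [i0 ki0] rel_k]]].
pose w : 'cV[K]_(\sum_(i < n) n) := \mxcol_j (k j *: v).
have Mw0 : triangulant_mx A B *m w = 0.
  rewrite mul_mxblock_mxrow -(mxcol0 (p_ := fun=> n)); apply: eq_mxcol => i.
  under eq_bigr do rewrite -mulmxA -scalemxAr (eigenvec_expr i Bv) scalerA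
    -scalemxAr mulrC -scalerA.
  by rewrite -scaler_sumr rel_k scaler0.
have w0 : w != 0.
  apply: contraNneq v0 => w0; move: (mxcolK (fun j => k j *: v) i0).
  by rewrite -/w w0 submxcol0 => /esym/eqP; rewrite scaler_eq0 (negbTE ki0).
apply/eqP; apply: contraNT w0 => M_unit.
by rewrite -(mulKmx (_ : triangulant_mx A B \in unitmx) w) ?Mw0 ?mulmx0 // unitmxE unitfE.
Qed.

Lemma triangulant_eq0_rows n (A B : 'M[K]_n.+1) : prop_top A B ->
  exists2 Y : 'M[K]_n.+1, Y != 0 &
    forall k, \sum_(i < n.+1) row i Y *m (A ^+ k *m B ^+ i) = 0.
Proof.
move=> /eqP /det0P [y y0 yM].
pose Y : 'M[K]_n.+1 := \matrix_(i, k) (submxrow y i) 0 k.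
have rowY i : row i Y = submxrow y i by apply/rowP => k; rewrite !mxE.
have relY (j : 'I_n.+1) : \sum_(i < n.+1) row i Y *m (A ^+ j *m B ^+ i) = 0.
  move: yM; rewrite -(submxrowK y) mul_mxrow_mxblock.
  move/(congr1 (fun M => submxrow M j)); rewrite mxrowK submxrow0 => relj.
  rewrite -[RHS]relj.
  by apply: eq_bigr => i _; rewrite rowY.
exists Y => [|k].
  apply: contraNneq y0 => Y0; apply/eqP.
  rewrite -(submxrowK y) -(mxrow0 (q_ := fun=> n.+1)).
  by apply: eq_mxrow => i; rewrite -rowY Y0 row0.
have [c ->] := expr_low_combination A k.
under eq_bigr do rewrite mulmx_suml mulmx_sumr.
rewrite exchange_big big1 // => j _.
under eq_bigr do rewrite -scalemxAl -scalemxAr.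
by rewrite -scaler_sumr relY scaler0.
Qed.

Lemma perp_of_eigencovec_plane n (A B : 'M[K]_n) (z w : 'rV[K]_n) lam v :
  z *m A = lam *: z -> w *m A = lam *: w -> z != 0 -> ~~ (w <= z)%MS ->
  eigenvec B v -> prop_perp A B.
Proof.
move=> zA wA z0 wz Bv; pose a := (z *m v) 0 0; pose b := (w *m v) 0 0.
have [a0|a_neq0] := eqVneq a 0.
  exists z, v; split; first by split=> //; exists lam.
  by split=> //; apply/eqP; rewrite [z *m v]mx11_scalar scalar_mx11_eq0 -/a a0.
exists (a *: w - b *: z), v; split; last split=> //.
  split; last first.
    exists lam; rewrite mulmxBl -!scalemxAl zA wA.
    by rewrite !scalerA scalerBr !scalerA mulrC [b * _]mulrC.
  apply: contraNneq wz => /eqP; rewrite subr_eq0 => /eqP awbz.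
  by apply/sub_rVP; exists (b / a); rewrite -[w](scalerK a_neq0) awbz scalerA mulrC.
apply/eqP; rewrite mulmxBl -!scalemxAl [z *m v]mx11_scalar [w *m v]mx11_scalar.
by rewrite !scale_scalar_mx -raddfB scalar_mx11_eq0 mulrC subrr.
Qed.

Lemma perp_of_krylov_relation n (A B : 'M[K]_n.+1) (z : 'rV[K]_n.+1) lam
    (c : 'I_n.+1 -> K) :
  splits_in B -> z *m A = lam *: z -> z != 0 -> (exists i, c i != 0) ->
  \sum_(i < n.+1) c i *: (z *m B ^+ i) = 0 -> prop_perp A B.
Proof.
move=> splitB zA z0 c_nz rel_c.
have : (\dim (KAv B^T z^T) < n.+1)%N.
  apply/KAv_dim_ltP; exists c => //; apply: trmx_inj.
  rewrite trmx0 -[RHS]rel_c linear_sum; apply: eq_bigr => i _.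
  by rewrite linearZ /= trmx_mul trmxK -trmx_expr trmxK.
case/KAv_dim_lt_eigencovec; first by rewrite splits_in_trmx.
move=> u /eigencovec_trmx Bu uz; exists z, u^T; split; first by split=> //; exists lam.
by split=> //; rewrite -[z]trmxK -trmx_mul uz trmx0.
Qed.

Lemma top_perp n (A B : 'M[K]_n.+1) :
  splits_in A -> splits_in B -> prop_top A B -> prop_perp A B.
Proof.
move=> splitA splitB /triangulant_eq0_rows [Y0 Y0_neq0 relY0].
pose P (Y : 'M[K]_n.+1) :=
  forall k, \sum_(i < n.+1) row i Y *m (A ^+ k *m B ^+ i) = 0.
have closedP Y l : P Y -> P (Y *m (A - l%:M)).
  move=> PY k; under eq_bigr do rewrite row_mul -mulmxA mulmxBl mul_scalar_mx
    mulmxA -[A *m _]/(A * A ^+ k) -exprS mulmxBr -scalemxAr.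
  by rewrite sumrB -scaler_sumr !PY scaler0 subr0.
have [Z [lam [PZ Z0 ZA]]] := splits_closed_left_eigen splitA closedP relY0 Y0_neq0.
have rowA i : row i Z *m A = lam *: row i Z.
  by rewrite -row_mul ZA; apply/rowP => j; rewrite !mxE.
have [i0 [j0 Zij0]] := matrix0Pn _ Z0; set z := row i0 Z.
have z0 : z != 0 by apply/rV0Pn; exists j0; rewrite mxE.
have [/submxP [D ZD] | /row_subPn [i Zi]] := boolP (Z <= z)%MS; last first.
  have [v Bv] := splits_eigenvec splitB.
  exact: perp_of_eigencovec_plane (rowA i0) (rowA i) z0 Zi Bv.
have rowZ i : row i Z = D i 0 *: z.
  by rewrite ZD row_mul [row i D]mx11_scalar mul_scalar_mx mxE.
apply: (perp_of_krylov_relation (c := fun i => D i 0) splitB (rowA i0) z0).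
  exists i0; apply: contraNneq z0 => Di0.
  by rewrite -[z]/(row i0 Z) rowZ Di0 scale0r.
have := PZ 0%N.
by under eq_bigr do rewrite expr0 mul1mx rowZ -scalemxAl.
Qed.

End Triangulant.

Theorem theorem1 (K : fieldType) (n : nat) (A B : 'M[K]_n) :
  (0 < n)%N ->
  ((prop_perp A B <-> prop_subset A B) /\
   (prop_subset A B <-> prop_triangle A B) /\
   (prop_triangle A B -> prop_lt A B) /\
   (prop_lt A B -> prop_top A B)) /\
  (splits_in A ->
   (prop_perp A B <-> prop_lt A B)) /\
  (splits_in A -> splits_in B ->
   (prop_perp A B <-> prop_top A B)).
Proof.
case: n A B => [//|n] A B _.
have perp_subsetE : prop_perp A B <-> prop_subset A B.
  by split; [apply: perp_subset | apply: subset_perp].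
have perp_triangleE : prop_perp A B <-> prop_triangle A B.
  by split; [apply: perp_triangle | apply: triangle_perp].
split; [|split].
- rewrite -perp_subsetE; split=> //; split=> //; split; last exact: lt_top.
  by move/perp_triangleE; apply: perp_lt.
- by move=> splitA; split; [apply: perp_lt | apply: lt_perp].
- move=> splitA splitB; split; last exact: top_perp.
  by move/perp_lt => /(_ isT); apply: lt_top.
Qed.
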